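(* Let $r\in\mathcal R_n$ be a distance matrix of order $n$. For any two vectors $a=(a_1,\dots,a_n)\in A(r)$ and $b=(b_1,\dots,b_n)\in A(r)$ there exists a real number $h\ge0$ such that $\bar b=(b_1,\dots,b_n,h)\in A(r^a)$ (and also $\bar a=(a_1,\dots,a_n,h)\in A(r^b)$).
   Context: $\mathcal R_n$ is the set of real symmetric $n\times n$ matrices with zero diagonal, nonnegative entries and $r_{i,k}+r_{k,j}\ge r_{i,j}$. For $r\in\mathcal R_n$, $A(r)=\{a\in\mathbb R^n: |a_i-a_j|\le r_{i,j}\le a_i+a_j\ \forall i,j\}$ is the set of admissible vectors, and for $a\in A(r)$, $r^a\in\mathcal R_{n+1}$ is the matrix obtained by adding $a$ as last row and last column (with $0$ in the corner). *)

From HB Require Import structures.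
From mathcomp Require Import all_boot all_order all_algebra.
From mathcomp Require Import reals.
Set Implicit Arguments. Unset Strict Implicit. Unset Printing Implicit Defensive.
Import Order.TTheory GRing.Theory Num.Theory.
Local Open Scope ring_scope.

Definition distR (R : realType) (n : nat) (r : 'M[R]_n) : Prop :=
  (forall i j, r i j = r j i) /\
  (forall i, r i i = 0) /\
  (forall i j, 0 <= r i j) /\
  (forall i j k, r i j <= r i k + r k j).

Definition admissible (R : realType) (n : nat) (r : 'M[R]_n) (a : 'rV[R]_n) : Prop :=
  forall i j, `|a 0 i - a 0 j| <= r i j /\ r i j <= a 0 i + a 0 j.

(* r^a : add a as last row and last column, 0 in the corner *)
Definition ext_mx (R : realType) (n : nat) (r : 'M[R]_n) (a : 'rV[R]_n) : 'M[R]_n.+1 :=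
  \matrix_(i, j)
    match unlift ord_max i, unlift ord_max j with
    | Some i', Some j' => r i' j'
    | Some i', None => a 0 i'
    | None, Some j' => a 0 j'
    | None, None => 0
    end.

Definition ext_vec (R : realType) (n : nat) (b : 'rV[R]_n) (h : R) : 'rV[R]_n.+1 :=
  \row_i match unlift ord_max i with Some i' => b 0 i' | None => h end.

From HB Require Import structures.
From mathcomp Require Import all_boot all_order all_algebra.
From mathcomp Require Import reals lra.
Set Implicit Arguments. Unset Strict Implicit. Unset Printing Implicit Defensive.
Import Order.TTheory GRing.Theory Num.Theory.
Local Open Scope ring_scope.

(* The new entry h must satisfy, for every i, the triangle inequalities of the
   three numbers a_i, b_i, h, which amount to |a_i - b_i| <= h <= a_i + b_i
   (a condition symmetric in a and b).  Admissibility of a and b gives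
   a_i - b_i <= (a_j + r_ij) - b_i <= a_j + b_j for all i, j, so every lower
   bound is below every upper bound and h := max_i |a_i - b_i| works. *)

Lemma triangle_permute (R : realDomainType) (x y z : R) :
  `|x - y| <= z <= x + y -> `|y - z| <= x <= y + z.
Proof. by rewrite !ler_norml => /andP[/andP[? ?] ?]; apply/andP; split=> //; lra. Qed.

Lemma admissible_ext (R : realType) (n : nat) (r : 'M[R]_n) (a b : 'rV[R]_n) (h : R) :
  admissible r b -> 0 <= h ->
  (forall i, `|a 0 i - b 0 i| <= h <= a 0 i + b 0 i) ->
  admissible (ext_mx r a) (ext_vec b h).
Proof.
move=> adm_b h_ge0 hab i j; rewrite !mxE.
have tri k : `|b 0 k - h| <= a 0 k <= b 0 k + h := triangle_permute (hab k).
case: (unliftP ord_max i) => [i'|] _; case: (unliftP ord_max j) => [j'|] _.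
- exact: adm_b.
- by have /andP := tri i'.
- by rewrite distrC [h + _]addrC; have /andP := tri j'.
- by rewrite subrr normr0 lexx addr_ge0.
Qed.

Lemma admissible_dist_le_add (R : realType) (n : nat) (r : 'M[R]_n) (a b : 'rV[R]_n) :
  admissible r a -> admissible r b -> forall i j, `|a 0 i - b 0 i| <= a 0 j + b 0 j.
Proof.
move=> adm_a adm_b i j; have [a_dist a_sum] := adm_a i j; have [b_dist b_sum] := adm_b i j.
move: a_dist b_dist; rewrite !ler_norml => /andP[? ?] /andP[? ?].
by apply/andP; split; lra.
Qed.

Lemma bigmax_between (R : realDomainType) (I : finType) (f g : I -> R) :
  (forall i, 0 <= f i) -> (forall i j, f i <= g j) ->
  exists2 h, 0 <= h & forall i, f i <= h <= g i.
Proof.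
move=> f_ge0 f_le_g; exists (\big[Num.max/0]_i f i); first exact: bigmax_ge_id.
move=> i; rewrite le_bigmax /=; apply: bigmax_le => [|k _].
- exact: le_trans (f_ge0 i) (f_le_g i i).
- exact: f_le_g.
Qed.

Theorem lemma3 (R : realType) (n : nat) (r : 'M[R]_n) (a b : 'rV[R]_n) :
  distR r -> admissible r a -> admissible r b ->
  exists h : R, 0 <= h /\
    admissible (ext_mx r a) (ext_vec b h) /\
    admissible (ext_mx r b) (ext_vec a h).
Proof.
move=> _ adm_a adm_b.
have [h h_ge0 hab] := bigmax_between (fun i => normr_ge0 (a 0 i - b 0 i))
  (admissible_dist_le_add adm_a adm_b).
exists h; split=> //; split; apply: admissible_ext => // i.
by rewrite distrC [b 0 i + _]addrC; exact: hab.
Qed.
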